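(* Let $m_1,m_2$ be positive real numbers with $m_1\leq 1.8m_2$. If $G\in\mathcal{G}_{m_1,m_2}$, then the disjoint union $G\cup K_t$ belongs to $\mathcal{G}_{m_1,m_2}$ for every integer $1\leq t\leq\lfloor 2m_1\rfloor$.
   Context: All graphs are finite and simple. For a graph $H$, $|H|$ denotes its number of vertices and $\lVert H\rVert$ its number of edges. For real numbers $m_1,m_2$, $\mathcal{G}_{m_1,m_2}$ is the class of graphs $G$ such that $\lVert H\rVert\leq m_1|H|$ for every subgraph $H$ of $G$, and $\lVert H\rVert\leq m_2|H|$ for every bipartite subgraph $H$ of $G$. $G\cup K_t$ denotes the vertex-disjoint union of $G$ and the complete graph on $t$ vertices. *)

From HB Require Import structures.
From mathcomp Require Import all_boot all_order all_algebra.
From mathcomp Require Import reals.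
Set Implicit Arguments. Unset Strict Implicit. Unset Printing Implicit Defensive.
Import Order.TTheory GRing.Theory Num.Theory.
Local Open Scope ring_scope.

Definition simple_graph (T : finType) (e : rel T) : Prop :=
  symmetric e /\ irreflexive e.

Definition edges (T : finType) (e : rel T) : {set {set T}} :=
  [set [set p.1; p.2] | p in [set q : T * T | e q.1 q.2]].

(* H = (S, F) is a subgraph of (T, e): F is a set of edges of the graph,
   each with both endpoints in S. |H| = #|S|, ||H|| = #|F|. *)
Definition is_subgraph (T : finType) (e : rel T) (S : {set T}) (F : {set {set T}}) :=
  (F \subset edges e) && [forall f in F, f \subset S].

Definition is_bipartite (T : finType) (S : {set T}) (F : {set {set T}}) :=
  [exists A : {set T}, (A \subset S) && [forall f in F, #|f :&: A| == 1%N]].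

Definition in_class (R : realType) (m1 m2 : R) (T : finType) (e : rel T) : Prop :=
  forall (S : {set T}) (F : {set {set T}}), is_subgraph e S F ->
    (#|F|%:R <= m1 * #|S|%:R) /\
    (is_bipartite S F -> #|F|%:R <= m2 * #|S|%:R).

Definition union_K (T : finType) (e : rel T) (t : nat) : rel (T + 'I_t)%type :=
  fun u v => match u, v with
             | inl x, inl y => e x y
             | inr i, inr j => i != j
             | _, _ => false
             end.
Arguments union_K {T} e t.

(* The edges of a subgraph H of the disjoint union of G and K_t split into those
   inside G, which form a subgraph of G on the vertices of H in G (bipartite if
   H is), and those inside K_t, which form a subgraph of K_s for the s <= t
   vertices of H in K_t.  The latter has at most s(s-1)/2 <= m1 s edges because
   t <= 2 m1, and, if bipartite, at most s^2/4 <= s t/4 <= m1 s/2 <= m2 s edges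
   because m1 <= 1.8 m2. *)

From HB Require Import structures.
From mathcomp Require Import all_boot all_order all_algebra.
From mathcomp Require Import reals.
From mathcomp Require Import ring lra.

Set Implicit Arguments.
Unset Strict Implicit.
Unset Printing Implicit Defensive.
Import Order.TTheory GRing.Theory Num.Theory.
Local Open Scope ring_scope.

Section PairCounting.
Variable Y : finType.

Lemma card_pairs_le (S : {set Y}) (F : {set {set Y}}) :
  {in F, forall f : {set Y}, f \subset S /\ #|f| = 2%N} -> (#|F| <= 'C(#|S|, 2))%N.
Proof.
move=> pairF; rewrite -cards_draws; apply/subset_leq_card/subsetP => f /pairF[fS f2].
by rewrite inE fS f2 /=.
Qed.

Lemma card_crossing_pairs_le (S A : {set Y}) (F : {set {set Y}}) :
  {in F, forall f : {set Y}, [/\ f \subset S, #|f| = 2%N & #|f :&: A| = 1%N]} ->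
  (#|F| <= #|S :&: A| * #|S :\: A|)%N.
Proof.
move=> crossF.
have split_inj : {in F &, injective (fun f => (f :&: A, f :\: A))}.
  by move=> f g _ _ [fgA fgD]; rewrite -(setID f A) -(setID g A) fgA fgD.
rewrite -(bin1 #|S :&: A|) -(bin1 #|S :\: A|) -!cards_draws -cardsX -(card_in_imset split_inj).
apply/subset_leq_card/subsetP => _ /imsetP[f /crossF[fS f2 fA1] ->].
by rewrite !inE cardsD fA1 f2 setSI ?setSD.
Qed.

End PairCounting.

Section DensityBounds.
Variable R : realFieldType.

Lemma complete_density_le (m : R) (s t : nat) :
  (s <= t)%N -> t%:R <= 2 * m -> 'C(s, 2)%:R <= m * s%:R.
Proof.
case: s => [|s] st tm; first by rewrite bin0n mulr0.
have twice_bin : 'C(s.+1, 2)%:R * 2 = s.+1%:R * s%:R :> R.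
  by rewrite -!natrM -[2%N]/(2`!) bin_ffact ffactnS ffactn1.
have st_R : s.+1%:R <= t%:R :> R by rewrite ler_nat.
have s_ge0 : 0 <= s%:R :> R by [].
rewrite -addn1 natrD in st_R twice_bin *; nra.
Qed.

(* 4ab <= (a + b)^2 <= 2 m1 (a + b) <= 3.6 m2 (a + b) *)
Lemma complete_bipartite_density_le (m1 m2 : R) (a b t : nat) :
  (a + b <= t)%N -> t%:R <= 2 * m1 -> m1 <= 18 / 10 * m2 ->
  (a * b)%:R <= m2 * (a + b)%:R.
Proof.
move=> abt tm1 m12; have abt_R : (a + b)%:R <= t%:R :> R by rewrite ler_nat.
rewrite natrM natrD in abt_R *.
have [a_ge0 b_ge0] : 0 <= a%:R :> R /\ 0 <= b%:R :> R by [].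
have amgm : 4 * (a%:R * b%:R) <= (a%:R + b%:R) ^+ 2 :> R.
  by rewrite -subr_ge0 (_ : _ - _ = (a%:R - b%:R) ^+ 2) ?sqr_ge0 //; ring.
nra.
Qed.

End DensityBounds.

Definition is_inl {A B : Type} (u : A + B) : bool := if u is inl _ then true else false.

Section UnionK.
Variables (T : finType) (e : rel T) (t : nat).
Local Notation X := (T + 'I_t)%type.

Definition left_side : {set X} := [set u | is_inl u].

Lemma card_preim_inl (Z : {set X}) : Z \subset left_side -> #|inl @^-1: Z| = #|Z|.
Proof.
move=> /subsetP ZL; rewrite -(card_imset _ (@inl_inj T 'I_t)).
apply: eq_card => u; apply/imsetP/idP => [[x] | uZ]; first by rewrite inE => ? ->.
case: u uZ (ZL u uZ) => [x xZ _ | i _]; last by rewrite inE.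
by exists x; rewrite ?inE.
Qed.

Definition left_side_subsets : {set {set X}} := [set f : {set X} | f \subset left_side].

Lemma preim_inl_inj :
  {in left_side_subsets &, injective (fun f : {set X} => inl @^-1: f)}.
Proof.
move=> f g; rewrite !inE => /subsetP fL /subsetP gL fg.
apply/setP => -[x | i]; first by have /setP/(_ x) := fg; rewrite !inE.
by apply/idP/idP => [/fL | /gL]; rewrite inE.
Qed.

Lemma preim_inl_edge f : f \in edges (union_K e t) -> f \subset left_side ->
  inl @^-1: f \in edges e.
Proof.
case/imsetP => -[[x | i] [y | j]]; rewrite inE //= => exy -> /subsetP fL.
  by apply/imsetP; exists (x, y); rewrite ?inE //; apply/setP => z; rewrite !inE.
by have := fL (inr i); rewrite !inE eqxx => /(_ isT).
Qed.

Lemma right_edge_pair f : f \in edges (union_K e t) -> ~~ (f \subset left_side) ->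
  f \subset ~: left_side /\ #|f| = 2%N.
Proof.
case/imsetP => -[[x | i] [y | j]]; rewrite inE //= => exy -> /subsetPn fL.
  by case: fL => u; rewrite !inE => /orP[]/eqP->.
split; first by apply/subsetP => u; rewrite !inE => /orP[]/eqP->.
by rewrite cards2 (inj_eq (@inr_inj _ _)) exy.
Qed.

Section Subgraph.
Variables (S : {set X}) (F : {set {set X}}).
Hypothesis SF_subgraph : is_subgraph (union_K e t) S F.

Definition left_vertices : {set T} := inl @^-1: S.
Definition right_vertices : {set X} := S :\: left_side.
Definition inner_left_edges : {set {set X}} := F :&: left_side_subsets.
Definition left_edges : {set {set T}} :=
  [set inl @^-1: f | f : {set X} in inner_left_edges].
Definition right_edges : {set {set X}} := F :\: left_side_subsets.

Lemma card_vertices_split : #|S| = (#|left_vertices| + #|right_vertices|)%N.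
Proof.
rewrite -(cardsID left_side S) -[#|S :&: _|]card_preim_inl ?subsetIr //.
by congr (_ + _)%N; apply: eq_card => x; rewrite !inE andbT.
Qed.

Lemma card_edges_split : #|F| = (#|left_edges| + #|right_edges|)%N.
Proof.
rewrite card_in_imset ?cardsID // => f g /setIP[_ fL] /setIP[_ gL].
exact: preim_inl_inj.
Qed.

Lemma left_subgraph : is_subgraph e left_vertices left_edges.
Proof.
case/andP: SF_subgraph => /subsetP FE /forall_inP FS.
apply/andP; split; [apply/subsetP | apply/forall_inP] => g /imsetP[f].
  by rewrite !inE => /andP[fF fL] ->; apply: preim_inl_edge (FE f fF) fL.
by rewrite !inE => /andP[fF _] ->; apply/preimsetS/FS.
Qed.

Lemma left_bipartite : is_bipartite S F -> is_bipartite left_vertices left_edges.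
Proof.
case/existsP => A /andP[AS /forall_inP AF]; apply/existsP; exists (inl @^-1: A).
rewrite preimsetS //=; apply/forall_inP => g /imsetP[f].
rewrite !inE => /andP[fF fL] ->.
by rewrite -preimsetI card_preim_inl ?AF // (subset_trans (subsetIl _ _) fL).
Qed.

Lemma right_edges_pairs :
  {in right_edges, forall f : {set X}, f \subset right_vertices /\ #|f| = 2%N}.
Proof.
case/andP: SF_subgraph => /subsetP FE /forall_inP FS f.
rewrite !inE => /andP[fL fF]; have [fR f2] := right_edge_pair (FE f fF) fL.
by rewrite /right_vertices setDE subsetI FS.
Qed.

Lemma card_right_vertices : (#|right_vertices| <= t)%N.
Proof.
apply: (@leq_trans #|[set (inr i : X) | i : 'I_t]|).
  by apply/subset_leq_card/subsetP => -[x | i]; rewrite !inE ?andbF // imset_f.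
by rewrite card_imset ?card_ord //; exact: inr_inj.
Qed.

Lemma right_edges_density (R : realFieldType) (m1 m2 : R) :
  t%:R <= 2 * m1 -> m1 <= 18 / 10 * m2 ->
  #|right_edges|%:R <= m1 * #|right_vertices|%:R /\
  (is_bipartite S F -> #|right_edges|%:R <= m2 * #|right_vertices|%:R).
Proof.
move=> tm1 m12; split.
  apply: le_trans (complete_density_le card_right_vertices tm1).
  by rewrite ler_nat card_pairs_le //; exact: right_edges_pairs.
case/existsP => A /andP[_ /forall_inP AF].
rewrite -(cardsID A right_vertices).
apply: le_trans (complete_bipartite_density_le _ tm1 m12).
  rewrite ler_nat card_crossing_pairs_le // => f fR.
  have [fS f2] := right_edges_pairs fR.
  by split=> //; apply/eqP/AF; move: fR; rewrite inE => /andP[].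
by rewrite cardsID card_right_vertices.
Qed.

End Subgraph.

End UnionK.

Theorem lemma3 (R : realType) (m1 m2 : R) (T : finType) (e : rel T) :
  0 < m1 -> 0 < m2 -> m1 <= 18 / 10 * m2 ->
  simple_graph e -> in_class m1 m2 e ->
  forall t : nat, (1 <= t)%N -> (t%:Z <= Num.floor (2 * m1))%R ->
    in_class m1 m2 (union_K e t).
Proof.
move=> _ _ m12 _ e_class t _ t_floor S F SF.
have tm1 : t%:R <= 2 * m1 by rewrite (le_trans _ (floor_le _)) // pmulrn ler_int.
have [left1 left2] := e_class _ _ (left_subgraph SF).
have [right1 right2] := right_edges_density SF tm1 m12.
rewrite card_edges_split (card_vertices_split S) !natrD !mulrDr.
split=> [|SF_bip]; apply: lerD; auto using left_bipartite.
Qed.
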